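(* Let $Q$ be an induced path in a graph $G$ and let $H_1,H_2$ be two Tutte bridges of $V(Q)$ in $G$ such that $|V(H_i)\cap V(Q)|=2$ for each $i\in\{1,2\}$, and such that $Q_1$ and $Q_2$ share at least one edge, where $Q_i$ denotes the minimal subpath of $Q$ containing $V(H_i)\cap V(Q)$. Then $G[V(H_1)\cup V(H_2)\cup V(Q_1)\cup V(Q_2)]$ contains an induced subdivision of the diamond.
   Context: All graphs are finite and simple. The diamond is $K_4$ minus one edge. An induced subdivision of a graph $H$ in $G$ is an induced subgraph of $G$ isomorphic to a graph obtained from $H$ by repeatedly replacing edges by paths of length $2$ through new vertices. For $A\subseteq V(G)$, a Tutte bridge of $A$ in $G$ is the subgraph of $G$ consisting of one connected component $K$ of $G-A$, together with all edges joining $K$ to $A$ and all vertices of $A$ incident with those edges. *)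

From mathcomp Require Import all_boot.
Set Implicit Arguments. Unset Strict Implicit. Unset Printing Implicit Defensive.

Section Graphs.
Variables (T : finType) (e : rel T).

Definition simple_graph : Prop := symmetric e /\ irreflexive e.

Definition induced_path (Q : seq T) : Prop :=
  uniq Q /\
  forall x y, x \in Q -> y \in Q ->
    e x y = ((index x Q).+1 == index y Q) || ((index y Q).+1 == index x Q).

Definition component_of_complement (A : {set T}) (K : {set T}) : Prop :=
  [/\ K != set0, [disjoint K & A],
      (forall x y, x \in K -> y \in K ->
         connect [rel u v | [&& e u v, u \in K & v \in K]] x y) &
      (forall x y, x \in K -> y \notin A -> e x y -> y \in K)].

Definition attachments (A K : {set T}) : {set T} :=
  [set y in A | [exists x in K, e x y]].

(* Vertex set of the Tutte bridge of A given by the component K. *)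
Definition bridge_vertices (A K : {set T}) : {set T} := K :|: attachments A K.

Definition subpath_vertices (Q : seq T) (a b : T) : {set T} :=
  [set x in Q | minn (index a Q) (index b Q) <= index x Q <= maxn (index a Q) (index b Q)].

Definition consecutive (s : seq T) (x y : T) : Prop :=
  exists s1 s2, s = s1 ++ x :: y :: s2 \/ s = s1 ++ y :: x :: s2.

(* The graph G[S] contains an induced subdivision of the diamond
   (K4 minus the edge cd, on branch vertices a,b,c,d): each of the five
   diamond edges ab, ac, ad, bc, bd is replaced by a path (with interior
   vertex lists p1..p5, possibly empty), all these vertices are distinct,
   lie in S, and the edges of G among them are exactly the path edges. *)
Definition induced_diamond_subdivision (S : {set T}) : Prop :=
  exists (a b c d : T) (p1 p2 p3 p4 p5 : seq T),
    let P1 := a :: rcons p1 b in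
    let P2 := a :: rcons p2 c in
    let P3 := a :: rcons p3 d in
    let P4 := b :: rcons p4 c in
    let P5 := b :: rcons p5 d in
    let U := a :: b :: c :: d :: p1 ++ p2 ++ p3 ++ p4 ++ p5 in
    [/\ uniq U,
        {subset U <= S} &
        forall x y, x \in U -> y \in U ->
          (e x y <-> (consecutive P1 x y \/ consecutive P2 x y \/
                       consecutive P3 x y \/ consecutive P4 x y \/
                       consecutive P5 x y))].

End Graphs.

From mathcomp Require Import all_boot zify.
Set Implicit Arguments. Unset Strict Implicit. Unset Printing Implicit Defensive.

(* Each bridge H_i yields an induced path P_i from a_i to b_i through its
   component whose inner vertices see Q only at a_i and b_i. Orient the paths so
   that a_i precedes b_i on Q and a_1 precedes a_2. As Q_1 and Q_2 share an
   edge, a_2 comes strictly before b_1 and b_2, and Q[a_1, max(b_1, b_2)] together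
   with P_1 and P_2 induces a theta graph: if b_2 <= b_1 its branch vertices are
   a_2, b_2 joined by Q[a_2, b_2], P_2 and Q[a_2, a_1] P_1 Q[b_1, b_2]; otherwise
   they are a_2, b_1 joined by Q[a_2, b_1], P_2 Q[b_2, b_1] and Q[a_2, a_1] P_1.
   A theta graph in which two of the three paths are long is an induced
   subdivision of the diamond. *)

Lemma rev_walk (T : eqType) (x : T) W : rev (x :: W) = last x W :: rev (belast x W).
Proof. by rewrite [x :: W]lastI rev_rcons. Qed.

Lemma last_rev_walk (T : eqType) (x : T) W : last (last x W) (rev (belast x W)) = x.
Proof. by rewrite -[RHS](last_rcons x (rev W) x) -rev_cons rev_walk. Qed.

Section Consecutive.
Variable T : finType.
Implicit Types (s p q : seq T) (x y u v : T).

Definition succ_in s u v := exists s1 s2, s = s1 ++ u :: v :: s2.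

Lemma consecutiveE s u v : consecutive s u v <-> succ_in s u v \/ succ_in s v u.
Proof.
split; first by case=> s1 [s2 [->|->]]; [left|right]; exists s1, s2.
by case=> -[s1 [s2 ->]]; exists s1, s2; [left|right].
Qed.

Lemma consecutive_sym s u v : consecutive s u v -> consecutive s v u.
Proof. by case=> s1 [s2 [->|->]]; exists s1, s2; [right|left]. Qed.

Lemma succ_in_cons2 x y s u v :
  succ_in [:: x, y & s] u v <-> (x = u /\ y = v) \/ succ_in (y :: s) u v.
Proof.
split.
- case=> -[|z s1] [s2 /=]; first by case=> -> -> _; left.
  by case=> _ E; right; exists s1, s2.
- case=> [[-> ->]|[s1 [s2 E]]]; first by exists [::], s.
  by exists (x :: s1), s2; rewrite E.
Qed.

Lemma succ_in_cat x p q u v :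
  succ_in (x :: p ++ q) u v <-> succ_in (x :: p) u v \/ succ_in (last x p :: q) u v.
Proof.
elim: p x => [|y p IH] x /=.
  split; [by right | case=> // -[s1 [s2 /(congr1 size)]]].
  by rewrite size_cat /=; lia.
move: (succ_in_cons2 x y (p ++ q) u v) (IH y) (succ_in_cons2 x y p u v); tauto.
Qed.

Lemma consecutive_cat x p q u v :
  consecutive (x :: p ++ q) u v <->
  consecutive (x :: p) u v \/ consecutive (last x p :: q) u v.
Proof.
rewrite !consecutiveE.
move: (succ_in_cat x p q u v) (succ_in_cat x p q v u); tauto.
Qed.

Lemma consecutive_rev s u v : consecutive (rev s) u v <-> consecutive s u v.
Proof.
suff rev_consecutive t : consecutive t u v -> consecutive (rev t) u v.
  by split=> /rev_consecutive //; rewrite revK.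
case=> s1 [s2 [->|->]]; exists (rev s2), (rev s1); [right|left];
  by rewrite rev_cat !rev_cons -!cats1 -!catA.
Qed.

Lemma consecutive_cons x s u v : consecutive s u v -> consecutive (x :: s) u v.
Proof. by case=> s1 [s2 [->|->]]; exists (x :: s1), s2; [left|right]. Qed.

Lemma consecutive_mem s u v : consecutive s u v -> u \in s /\ v \in s.
Proof. by case=> s1 [s2 [->|->]]; rewrite !mem_cat !inE !eqxx !orbT. Qed.

Lemma succ_in_index s u v : uniq s -> succ_in s u v -> (index u s).+1 = index v s.
Proof.
move=> Us [s1 [s2 E]]; move: Us; rewrite E cat_uniq /= !inE !negb_or.
case/and3P=> _ /and3P[us1 vs1 _] /and3P[/andP[uv _] _ _].
by rewrite !index_cat (negbTE us1) (negbTE vs1) /= eqxx (negbTE uv) eqxx addnS.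
Qed.

Lemma index_succ_in s u v : v \in s -> (index u s).+1 = index v s -> succ_in s u v.
Proof.
move=> vs Huv; have us : u \in s by rewrite -index_mem -ltnS Huv ltnS ltnW // index_mem.
exists (take (index u s) s), (drop (index v s).+1 s).
rewrite -{1}(cat_take_drop (index u s) s) (drop_nth u) ?index_mem // nth_index //.
by rewrite Huv (drop_nth u) ?index_mem // nth_index.
Qed.

Lemma consecutive_indexP s u v : uniq s -> u \in s -> v \in s ->
  consecutive s u v <-> ((index u s).+1 == index v s) || ((index v s).+1 == index u s).
Proof.
move=> Us us vs; rewrite consecutiveE; split.
  by case=> /(succ_in_index Us) ->; rewrite eqxx ?orbT.
by case/orP=> /eqP; [left; apply: index_succ_in | right; apply: index_succ_in].
Qed.

Lemma path_consecutive (r : rel T) x p u v :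
  path r x p -> consecutive (x :: p) u v -> r u v \/ r v u.
Proof.
suff path_succ_in y t a b : path r y t -> succ_in (y :: t) a b -> r a b.
  by move=> Hp /consecutiveE [] /(path_succ_in _ _ _ _ Hp); [left|right].
elim: t y => [|z t IH] y Hp.
  by case=> s1 [s2 /(congr1 size)]; rewrite size_cat /=; lia.
by move: Hp => /= /andP[ryz Hp] /succ_in_cons2 [[<- <-] // | /(IH _ Hp)].
Qed.

Lemma consecutive_rev_walk x W u v :
  consecutive (last x W :: rev (belast x W)) u v <-> consecutive (x :: W) u v.
Proof. by rewrite -rev_walk consecutive_rev. Qed.

End Consecutive.

Section Chordless.
Variables (T : finType) (r : rel T).
Hypotheses (rsym : symmetric r) (rirr : irreflexive r).

Definition chordless (s : seq T) :=
  uniq s /\ forall u w, u \in s -> w \in s -> r u w -> consecutive s u w.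

Lemma chordless1 x : chordless [:: x].
Proof. by split=> // u w; rewrite !inE => /eqP-> /eqP->; rewrite rirr. Qed.

Lemma chordless_cons x y q : r x y ->
  (forall z, z \in q -> ~~ r x z /\ z != x) ->
  chordless (y :: q) -> chordless [:: x, y & q].
Proof.
move=> rxy xq [Uq Cq].
have xy : x != y by apply: contraTneq rxy => ->; rewrite rirr.
have Cx w : w \in [:: x, y & q] -> r x w -> consecutive [:: x, y & q] x w.
  rewrite !inE => /or3P[/eqP->|/eqP-> _|/xq[/negbTE->//]]; first by rewrite rirr.
  by exists [::], q; left.
split.
  rewrite /= inE negb_or xy; move: Uq => /= ->; rewrite andbT.
  by apply/negP=> /xq[_]; rewrite eqxx.
move=> u w Hu; rewrite in_cons => /orP[/eqP-> rux|wq].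
  by apply/consecutive_sym/Cx; rewrite // rsym.
move: Hu; rewrite in_cons => /orP[/eqP-> | uq]; first by apply: Cx; rewrite in_cons wq orbT.
by move=> ruw; apply/consecutive_cons/Cq.
Qed.

Lemma split_last_has (P : pred T) s : has P s ->
  exists s1 y s2, [/\ s = s1 ++ y :: s2, P y & ~~ has P s2].
Proof.
elim: s => [|z s IH] //= Hs; case Ps: (has P s).
  by have [s1 [y [s2 [-> Py s2P]]]] := IH Ps; exists (z :: s1), y, s2.
by rewrite Ps orbF in Hs; exists [::], z, s; rewrite Ps.
Qed.

(* Jump from x to the last vertex of the walk that is x itself or a neighbour of x. *)
Lemma chordless_subpath x p : path r x p ->
  exists q, [/\ path r x q, last x q = last x p, {subset q <= p} & chordless (x :: q)].
Proof.
have [n Hn] := ubnP (size p); elim: n x p Hn => // n IH x [|y0 p'] Hs Hp.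
  by exists [::]; split=> //; exact: chordless1.
set p := y0 :: p' in Hs Hp *.
have /split_last_has [s1 [y [s2 [Ep xy_y s2n]]]] : has (fun z => r x z || (z == x)) p.
  by move: Hp => /= /andP[->].
have Hs2 : size s2 < n by move: Hs; rewrite Ep size_cat /=; lia.
have Hp2 : path r y s2 by move: Hp; rewrite Ep cat_path /= => /and3P[].
have last_p : last x p = last y s2 by rewrite Ep last_cat.
have s2p : {subset s2 <= p} by move=> z zs; rewrite Ep mem_cat inE zs !orbT.
case/orP: xy_y => [rxy | /eqP yx].
- have [q [Hq Lq Sq Cq]] := IH y s2 Hs2 Hp2.
  exists (y :: q); split.
  + by rewrite /= rxy.
  + by rewrite last_p.
  + move=> z; rewrite inE => /orP[/eqP->|/Sq/s2p //].
    by rewrite Ep mem_cat inE eqxx orbT.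
  + apply: chordless_cons => // z /Sq zs2.
    by move/hasPn: s2n => /(_ z zs2); rewrite negb_or => /andP[].
- rewrite yx in Hp2 last_p; have [q [Hq Lq Sq Cq]] := IH x s2 Hs2 Hp2.
  by exists q; split=> // [|z /Sq /s2p //]; rewrite Lq last_p.
Qed.

End Chordless.

Section Components.
Variables (T : finType) (e : rel T) (A : {set T}).
Implicit Types K : {set T}.

Lemma component_notin K u : component_of_complement e A K -> u \in K -> u \notin A.
Proof. by case=> _ D _ _ uK; rewrite (disjointFr D uK). Qed.

Lemma component_sub K1 K2 v :
  component_of_complement e A K1 -> component_of_complement e A K2 ->
  v \in K1 -> v \in K2 -> K1 \subset K2.
Proof.
move=> c1 [_ _ _ closed2] v1 v2; apply/subsetP=> x xK1.
case: (c1) => _ _ conn1 _; have /connectP [p Hp ->] := conn1 v x v1 xK1.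
elim: p v v1 v2 Hp {xK1} => [|z p IH] y y1 y2 //= /andP[/and3P[eyz _ zK1] Hp].
apply: (IH z zK1 _ Hp); apply: (closed2 y z y2) => //; exact: component_notin c1 zK1.
Qed.

Lemma component_eq K1 K2 v :
  component_of_complement e A K1 -> component_of_complement e A K2 ->
  v \in K1 -> v \in K2 -> K1 = K2.
Proof.
move=> c1 c2 v1 v2; apply/eqP.
by rewrite eqEsubset (component_sub c1 c2 v1 v2) (component_sub c2 c1 v2 v1).
Qed.

Lemma components_disjoint K1 K2 u :
  component_of_complement e A K1 -> component_of_complement e A K2 ->
  K1 != K2 -> u \in K1 -> u \notin K2.
Proof.
by move=> c1 c2 + uK1; apply: contra => uK2; rewrite (component_eq c1 c2 uK1 uK2) eqxx.
Qed.

Lemma components_no_edge K1 K2 u v :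
  component_of_complement e A K1 -> component_of_complement e A K2 ->
  K1 != K2 -> u \in K1 -> v \in K2 -> ~~ e u v.
Proof.
move=> c1 c2 + uK1 vK2; apply: contra => euv.
have vK1 : v \in K1.
  by case: c1 => _ _ _ closed1; apply: closed1 uK1 _ euv; exact: component_notin c2 vK2.
by rewrite (component_eq c1 c2 vK1 vK2) eqxx.
Qed.

Lemma attachments_subset K : attachments e A K \subset A.
Proof. by apply/subsetP=> y; rewrite inE => /andP[]. Qed.

End Components.

Section Subpaths.
Variable T : finType.

Lemma subpath_verticesC (Q : seq T) a b : subpath_vertices Q a b = subpath_vertices Q b a.
Proof. by rewrite /subpath_vertices minnC maxnC. Qed.

Lemma mem_subpath_vertices (Q : seq T) a b x : index a Q <= index b Q ->
  (x \in subpath_vertices Q a b) = (x \in Q) && (index a Q <= index x Q <= index b Q).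
Proof. by move=> le_ab; rewrite inE (minn_idPl le_ab) (maxn_idPr le_ab). Qed.

End Subpaths.

Section Ears.
Variables (T : finType) (e : rel T).
Hypothesis sg : simple_graph e.

Definition ear (Q : seq T) (a b : T) (s : seq T) :=
  [/\ s != [::], uniq s, (forall u, u \in s -> u \notin Q),
      (forall u w, consecutive (a :: rcons s b) u w -> e u w) &
      (forall u w, u \in s -> (w \in Q) || (w \in s) -> e u w ->
          consecutive (a :: rcons s b) u w)].

Lemma ear_rev Q a b s : ear Q a b s -> ear Q b a (rev s).
Proof.
have revE : rev (a :: rcons s b) = b :: rcons (rev s) a by rewrite rev_cons rev_rcons.
case=> [ne U nQ C1 C2]; split.
- by rewrite -size_eq0 size_rev size_eq0.
- by rewrite rev_uniq.
- by move=> u; rewrite mem_rev; exact: nQ.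
- by move=> u w; rewrite -revE consecutive_rev; exact: C1.
- by move=> u w; rewrite !mem_rev -revE consecutive_rev; exact: C2.
Qed.

Lemma ear_size Q a b s : ear Q a b s -> 1 < size (rcons s b).
Proof. by case=> ne _ _ _ _; rewrite size_rcons ltnS lt0n size_eq0. Qed.

Lemma attachments2_mem (Q : seq T) (K : {set T}) a b :
  attachments e [set x in Q] K = [set a; b] -> {subset [set a; b] <= Q}.
Proof. by move=> <- z /(subsetP (attachments_subset _ _ _)); rewrite inE. Qed.

Definition remove_edge (r : rel T) (a b : T) : rel T :=
  [rel u v | r u v && ~~ (((u == a) && (v == b)) || ((u == b) && (v == a)))].

Lemma remove_edge_sym r a b : symmetric r -> symmetric (remove_edge r a b).
Proof.
move=> rsym u v; rewrite /remove_edge /= rsym; congr (_ && ~~ _).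
by rewrite orbC; congr (_ || _); exact: andbC.
Qed.

Lemma remove_edge_irr r a b : irreflexive r -> irreflexive (remove_edge r a b).
Proof. by move=> rirr u; rewrite /remove_edge /= rirr. Qed.

Lemma bridge_walk (Q : seq T) (K : {set T}) a b :
  component_of_complement e [set x in Q] K -> attachments e [set x in Q] K = [set a; b] ->
  exists2 p, {subset p <= K} & path (remove_edge e a b) a (rcons p b).
Proof.
move=> cK attK; have [esym _] := sg.
have att z : z \in [set a; b] -> exists2 k, k \in K & e k z.
  by rewrite -attK inE => /andP[_ /existsP[k /andP[kK ekz]]]; exists k.
have attQ := attachments2_mem attK.
have Kab z : z \in K -> (z != a) && (z != b).
  move/(component_notin cK); rewrite inE => zQ.
  by apply/andP; split; apply: contraNneq zQ => ->; apply: attQ; rewrite !inE eqxx ?orbT.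
have walkK y p : y \in K -> path [rel u v | [&& e u v, u \in K & v \in K]] y p ->
    {subset p <= K} /\ path (remove_edge e a b) y p.
  elim: p y => [|z p IH] y yK /=; first by [].
  case/andP=> /and3P[eyz _ zK] /(IH z zK)[pK Hp].
  split; first by move=> w; rewrite inE => /orP[/eqP->|/pK].
  rewrite Hp andbT /remove_edge /= eyz.
  by case/andP: (Kab y yK) => /negbTE-> /negbTE->.
have [ka kaK eka] := att a (setU11 a [set b]).
have [kb kbK ekb] := att b (setU1r a (set11 b)).
case: (cK) => _ _ conn _; have /connectP [p Hp last_p] := conn ka kb kaK kbK.
have [pK Hp'] := walkK ka p kaK Hp.
exists (ka :: p); first by move=> w; rewrite inE => /orP[/eqP->|/pK].
rewrite rcons_cons /= rcons_path Hp' -last_p /remove_edge /= esym eka ekb.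
case/andP: (Kab ka kaK) (Kab kb kbK) => /negbTE-> /negbTE-> /andP[/negbTE-> /negbTE->].
by rewrite !andbF.
Qed.

(* Removing the edge ab forces the shortened walk through the component. *)
Lemma ear_exists (Q : seq T) (K : {set T}) a b :
  component_of_complement e [set x in Q] K -> a != b ->
  attachments e [set x in Q] K = [set a; b] ->
  exists2 s, ear Q a b s & {subset s <= K}.
Proof.
move=> cK ab attK; have [esym eirr] := sg.
have [p pK Hp] := bridge_walk cK attK.
have [q [Hq Lq Sq [Uq Cq]]] :=
  chordless_subpath (remove_edge_sym a b esym) (remove_edge_irr a b eirr) Hp.
case/lastP: q Hq Lq Sq Uq Cq => [|s b'] Hq; rewrite /= !last_rcons => Lq.
  by rewrite Lq eqxx in ab.
move: Lq Hq => -> Hq Sq Uq Cq.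
have sne : s != [::] by apply: contraTneq Hq => ->; rewrite /= /remove_edge /= !eqxx andbF.
move: Uq; rewrite /= mem_rcons inE negb_or rcons_uniq => /andP[/andP[_ aS] /andP[bS Us]].
have sK : {subset s <= K}.
  move=> u us; have := Sq u; rewrite !mem_rcons !inE us orbT => /(_ isT) /orP[/eqP ub|/pK //].
  by rewrite -ub us in bS.
exists s => //; split=> //.
- by move=> u /sK /(component_notin cK); rewrite inE.
- by move=> u w /(path_consecutive Hq) [] /andP[euw _] //; rewrite esym.
move=> u w us Hw euw.
have wE : w \in a :: rcons s b.
  case/orP: Hw => [wQ|ws]; last by rewrite inE mem_rcons inE ws !orbT.
  have : w \in attachments e [set x in Q] K.
    by rewrite !inE wQ /=; apply/existsP; exists u; rewrite sK.
  by rewrite attK !inE mem_rcons inE => /orP[->|->]; rewrite ?orbT.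
apply: Cq => //; first by rewrite inE mem_rcons inE us !orbT.
have ua : u != a by apply: contraNneq aS => <-.
have ub : u != b by apply: contraNneq bS => <-.
by rewrite /remove_edge /= euw (negbTE ua) (negbTE ub).
Qed.

Lemma oriented_ear (Q : seq T) (K : {set T}) a b :
  component_of_complement e [set x in Q] K -> a != b ->
  attachments e [set x in Q] K = [set a; b] ->
  exists a' b' s, [/\ ear Q a' b' s, {subset s <= K}, b' \in Q,
    index a' Q < index b' Q & subpath_vertices Q a' b' = subpath_vertices Q a b].
Proof.
move=> cK ab attK; have [s E sK] := ear_exists cK ab attK.
have attQ := attachments2_mem attK.
have [aQ bQ] := (attQ a (setU11 a [set b]), attQ b (setU1r a (set11 b))).
case: (ltngtP (index a Q) (index b Q)) => [lt_ab|lt_ba|eq_ab].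
- by exists a, b, s.
- exists b, a, (rev s); split=> //; first exact: ear_rev.
    by move=> u; rewrite mem_rev => /sK.
  exact: subpath_verticesC.
- by move: ab; rewrite -(nth_index a aQ) eq_ab nth_index ?eqxx.
Qed.

End Ears.

Section Theta.
Variables (T : finType) (e : rel T).

Lemma long_walkP (x y : T) W : last x W = y -> 1 < size W -> exists c t, W = c :: rcons t y.
Proof.
case: W => [|c W] //=; case/lastP: W => [|t z] //=; rewrite last_rcons => -> _.
by exists c, t.
Qed.

(* The first inner vertices of the two long walks become the degree-two branch
   vertices of the diamond. *)
Lemma theta_diamond (S : {set T}) x y W1 W2 W3 L :
  last x W1 = y -> last x W2 = y -> last x W3 = y ->
  0 < size W1 -> 1 < size W2 -> 1 < size W3 ->
  perm_eq (x :: W1 ++ W2 ++ W3) (y :: y :: L) -> uniq L -> {subset L <= S} ->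
  (forall u v, u \in L -> v \in L ->
     (e u v <-> consecutive (x :: W1) u v \/ consecutive (x :: W2) u v \/
                consecutive (x :: W3) u v)) ->
  induced_diamond_subdivision e S.
Proof.
move=> L1 L2 L3 S1 S2 S3 permL UL SL edgesL.
case/lastP: W1 L1 S1 permL edgesL => [|r1 z] //; rewrite last_rcons => -> _ permL edgesL.
have [c [t2 E2]] := long_walkP L2 S2; have [d [t3 E3]] := long_walkP L3 S3.
subst W2 W3.
set U := [:: x, y, c, d & r1 ++ [::] ++ [::] ++ rev t2 ++ rev t3].
have UL' : perm_eq U L.
  rewrite -(perm_cons y) -(perm_cons y) (perm_trans _ permL) //.
  apply/permP => P; rewrite /U /= !count_cat /= !count_rev -!cats1.
  by rewrite !count_cat /= !count_cat /=; lia.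
exists x, y, c, d, r1, [::], [::], (rev t2), (rev t3); cbv zeta; split.
- by rewrite (perm_uniq UL').
- by move=> u; rewrite (perm_mem UL'); exact: SL.
move=> u v; rewrite !(perm_mem UL') => Hu Hv.
have splitW w t : consecutive [:: x, w & rcons t y] u v <->
    consecutive (x :: rcons [::] w) u v \/ consecutive (y :: rcons (rev t) w) u v.
  have -> : y :: rcons (rev t) w = rev (w :: rcons t y) by rewrite rev_cons rev_rcons.
  rewrite consecutive_rev; exact: (consecutive_cat x [:: w] (rcons t y) u v).
move: (edgesL u v Hu Hv) (splitW c t2) (splitW d t3); tauto.
Qed.

End Theta.

Section Segments.
Variable T : finType.
Implicit Types (Q : seq T) (i j : nat).

Definition segment Q i j := take (j - i) (drop i.+1 Q).

Lemma segment_cat Q i j : i <= j -> segment Q i j ++ drop j.+1 Q = drop i.+1 Q.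
Proof.
move=> le_ij; rewrite /segment -{2}(cat_take_drop (j - i) (drop i.+1 Q)) drop_drop.
by congr (_ ++ drop _ Q); lia.
Qed.

Lemma size_segment Q i j : i <= j -> j < size Q -> size (segment Q i j) = j - i.
Proof. by move=> le_ij lt_j; rewrite /segment size_takel // size_drop; lia. Qed.

Lemma last_segment Q x0 i j : i <= j -> j < size Q ->
  last (nth x0 Q i) (segment Q i j) = nth x0 Q j.
Proof.
move=> + lt_j; case: ltngtP => // [lt_ij _|-> _]; last by rewrite /segment subnn take0.
rewrite -nth_last (size_segment (ltnW lt_ij) lt_j) /segment nth_take; last by lia.
rewrite nth_drop (_ : i.+1 + (j - i).-1 = j); last by lia.
exact: set_nth_default.
Qed.

Lemma index_cat_mid (l s r : seq T) w : uniq (l ++ s ++ r) -> w \in s ->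
  index w (l ++ s ++ r) = size l + index w s.
Proof.
rewrite cat_uniq => /and3P[_ ls _] ws.
have wl : w \notin l by apply: (hasPn ls); rewrite mem_cat ws.
by rewrite index_cat (negbTE wl) index_cat ws.
Qed.

Lemma split_path4 Q (a1 a2 m M : T) : uniq Q -> M \in Q ->
  index a1 Q <= index a2 Q -> index a2 Q < index m Q -> index m Q <= index M Q ->
  exists l A B C r,
   [/\ Q = l ++ (a1 :: A ++ B ++ C) ++ r, last a1 A = a2, last a2 B = m,
       last m C = M &
       0 < size B /\ forall w, w \in a1 :: A ++ B ++ C ->
                        index a1 Q <= index w Q <= index M Q].
Proof.
move=> UQ MQ h12 h23 h34.
have sM : index M Q < size Q by rewrite index_mem.
have inQ z : index z Q <= index M Q -> z \in Q.
  by move=> hz; rewrite -index_mem (leq_ltn_trans hz sM).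
have a1Q : a1 \in Q by apply: inQ; lia.
have lastS z z' : index z Q <= index z' Q -> index z' Q <= index M Q ->
    last z (segment Q (index z Q) (index z' Q)) = z'.
  move=> hzz' hz'; have := last_segment z hzz' (leq_ltn_trans hz' sM).
  by rewrite !nth_index //; apply: inQ; lia.
set A := segment Q (index a1 Q) (index a2 Q).
set B := segment Q (index a2 Q) (index m Q).
set C := segment Q (index m Q) (index M Q).
have EQ : Q = take (index a1 Q) Q ++ (a1 :: A ++ B ++ C) ++ drop (index M Q).+1 Q.
  rewrite /= -!catA !segment_cat ?(ltnW h23) //.
  by rewrite -{1}(cat_take_drop (index a1 Q) Q) (drop_nth a1) ?index_mem // nth_index.
exists (take (index a1 Q) Q), A, B, C, (drop (index M Q).+1 Q); split=> //.
- by apply: lastS; lia.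
- by apply: lastS; lia.
- exact: lastS.
have szQs : size (a1 :: A ++ B ++ C) = (index M Q - index a1 Q).+1.
  rewrite /= !size_cat (size_segment h12) ?(size_segment (ltnW h23)) ?(size_segment h34) //;
    lia.
split; first by rewrite size_segment //; lia.
move=> w ws; have := ws; rewrite -index_mem szQs => hw.
have -> : index w Q = index a1 Q + index w (a1 :: A ++ B ++ C).
  rewrite {1}EQ index_cat_mid -?EQ //.
  by rewrite size_takel // ltnW // index_mem.
lia.
Qed.

End Segments.

Section InducedPath.
Variables (T : finType) (e : rel T) (Q : seq T).
Hypotheses (sg : simple_graph e) (ip : induced_path e Q).

Lemma induced_path_infix l s r u v : Q = l ++ s ++ r -> u \in s -> v \in s ->
  e u v <-> consecutive s u v.
Proof.
case: ip => UQ HQ EQ us vs.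
have sQ w : w \in s -> w \in Q by rewrite EQ !mem_cat => ->; rewrite orbT.
have Us : uniq s by move: UQ; rewrite EQ !cat_uniq => /and3P[_ _ /andP[]].
rewrite EQ in UQ; rewrite HQ ?sQ // EQ !index_cat_mid // -!addnS !eqn_add2l.
exact: iff_sym (consecutive_indexP Us us vs).
Qed.

Section TwoEars.
Variables (a1 b1 a2 b2 : T) (s1 s2 : seq T).
Hypotheses (E1 : ear e Q a1 b1 s1) (E2 : ear e Q a2 b2 s2).
Hypothesis no_edge12 : forall u v, u \in s1 -> v \in s2 -> ~~ e u v.
Hypothesis disjoint12 : forall u, u \in s1 -> u \notin s2.

Lemma ears_layout_uniq l Qs r : Q = l ++ Qs ++ r -> uniq (Qs ++ s1 ++ s2).
Proof.
case: ip => UQ _ EQ; case: E1 => _ U1 notQ1 _ _; case: E2 => _ U2 notQ2 _ _.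
have QsQ w : w \in Qs -> w \in Q by rewrite EQ !mem_cat => ->; rewrite orbT.
rewrite !cat_uniq U1 U2 /= !andbT; apply/and3P; split.
- by move: UQ; rewrite EQ !cat_uniq => /and3P[_ _ /andP[]].
- apply/hasPn=> w; rewrite mem_cat => /orP[] ws; apply: contraL (ws) => /QsQ.
    exact/contraL/notQ1.
  exact/contraL/notQ2.
- by apply/hasPn=> w ws; apply: contraL ws => /disjoint12.
Qed.

Lemma ears_layout_edges l Qs r u v : Q = l ++ Qs ++ r ->
  u \in Qs ++ s1 ++ s2 -> v \in Qs ++ s1 ++ s2 ->
  e u v <-> consecutive Qs u v \/ consecutive (a1 :: rcons s1 b1) u v \/
            consecutive (a2 :: rcons s2 b2) u v.
Proof.
move=> EQ; have [esym _] := sg.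
case: E1 => _ _ _ path1 chord1; case: E2 => _ _ _ path2 chord2.
have QsQ w : w \in Qs -> w \in Q by rewrite EQ !mem_cat => ->; rewrite orbT.
have ear1 w z : w \in s1 -> (z \in Qs) || (z \in s1) -> e w z ->
    consecutive (a1 :: rcons s1 b1) w z.
  by move=> ws /orP[/QsQ|] zs; apply: chord1; rewrite ?zs ?orbT.
have ear2 w z : w \in s2 -> (z \in Qs) || (z \in s2) -> e w z ->
    consecutive (a2 :: rcons s2 b2) w z.
  by move=> ws /orP[/QsQ|] zs; apply: chord2; rewrite ?zs ?orbT.
rewrite !mem_cat => Hu Hv; split; last first.
  case=> [|[]]; [|exact: path1|exact: path2].
  by move=> H; have [uQs vQs] := consecutive_mem H; apply/(induced_path_infix EQ uQs vQs).
move=> euv; case/or3P: Hu => Hu; case/or3P: Hv => Hv.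
- by left; apply/(induced_path_infix EQ Hu Hv).
- by right; left; apply/consecutive_sym/ear1; rewrite ?Hu // esym.
- by right; right; apply/consecutive_sym/ear2; rewrite ?Hu // esym.
- by right; left; apply: ear1; rewrite ?Hv.
- by right; left; apply: ear1; rewrite ?Hv ?orbT.
- by move: (no_edge12 Hu Hv); rewrite euv.
- by right; right; apply: ear2; rewrite ?Hv.
- by move: (no_edge12 Hv Hu); rewrite esym euv.
- by right; right; apply: ear2; rewrite ?Hv ?orbT.
Qed.

Lemma nested_ears_diamond (S : {set T}) l A B C r :
  Q = l ++ (a1 :: A ++ B ++ C) ++ r ->
  last a1 A = a2 -> last a2 B = b2 -> last b2 C = b1 -> 0 < size B ->
  {subset (a1 :: A ++ B ++ C) ++ s1 ++ s2 <= S} -> induced_diamond_subdivision e S.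
Proof.
move=> EQ LA LB LC szB SL.
have LrA : last a2 (rev (belast a1 A)) = a1 by rewrite -LA last_rev_walk.
apply: (@theta_diamond _ e S a2 b2 B (rcons s2 b2)
   (rev (belast a1 A) ++ rcons s1 b1 ++ rev (belast b2 C))
   ((a1 :: A ++ B ++ C) ++ s1 ++ s2) LB) => //.
- by rewrite last_rcons.
- by rewrite !last_cat last_rcons -LC last_rev_walk.
- exact: ear_size E2.
- by rewrite !size_cat; apply: leq_trans (ear_size E1) _; rewrite addnCA leq_addr.
- apply/permP=> P.
  have FA := congr1 (count P) (rev_walk a1 A); rewrite count_rev LA /= in FA.
  have FC := congr1 (count P) (rev_walk b2 C); rewrite count_rev LC /= in FC.
  by rewrite /= !count_cat /= -!cats1 !count_cat /= ?count_cat /=; lia.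
- exact: ears_layout_uniq EQ.
move=> u v Hu Hv; have := ears_layout_edges EQ Hu Hv.
have := consecutive_cat a1 A (B ++ C) u v; have := consecutive_cat a2 B C u v.
have := consecutive_cat a2 (rev (belast a1 A)) (rcons s1 b1 ++ rev (belast b2 C)) u v.
have := consecutive_cat a1 (rcons s1 b1) (rev (belast b2 C)) u v.
rewrite LrA LA LB last_rcons.
have := consecutive_rev_walk a1 A u v; have := consecutive_rev_walk b2 C u v.
rewrite LA LC; tauto.
Qed.

Lemma crossing_ears_diamond (S : {set T}) l A B C r :
  Q = l ++ (a1 :: A ++ B ++ C) ++ r ->
  last a1 A = a2 -> last a2 B = b1 -> last b1 C = b2 -> 0 < size B ->
  {subset (a1 :: A ++ B ++ C) ++ s1 ++ s2 <= S} -> induced_diamond_subdivision e S.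
Proof.
move=> EQ LA LB LC szB SL.
have LrA : last a2 (rev (belast a1 A)) = a1 by rewrite -LA last_rev_walk.
apply: (@theta_diamond _ e S a2 b1 B (rcons s2 b2 ++ rev (belast b1 C))
   (rev (belast a1 A) ++ rcons s1 b1)
   ((a1 :: A ++ B ++ C) ++ s1 ++ s2) LB) => //.
- by rewrite last_cat last_rcons -LC last_rev_walk.
- by rewrite last_cat last_rcons.
- by rewrite size_cat; apply: leq_trans (ear_size E2) (leq_addr _ _).
- by rewrite size_cat; apply: leq_trans (ear_size E1) (leq_addl _ _).
- apply/permP=> P.
  have FA := congr1 (count P) (rev_walk a1 A); rewrite count_rev LA /= in FA.
  have FC := congr1 (count P) (rev_walk b1 C); rewrite count_rev LC /= in FC.
  by rewrite /= !count_cat /= -!cats1 !count_cat /= ?count_cat /=; lia.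
- exact: ears_layout_uniq EQ.
move=> u v Hu Hv; have := ears_layout_edges EQ Hu Hv.
have := consecutive_cat a1 A (B ++ C) u v; have := consecutive_cat a2 B C u v.
have := consecutive_cat a2 (rcons s2 b2) (rev (belast b1 C)) u v.
have := consecutive_cat a2 (rev (belast a1 A)) (rcons s1 b1) u v.
rewrite LrA LA LB last_rcons.
have := consecutive_rev_walk a1 A u v; have := consecutive_rev_walk b1 C u v.
rewrite LA LC; tauto.
Qed.

End TwoEars.

Lemma overlapping_ears_diamond (S : {set T}) a1 b1 a2 b2 s1 s2 x y :
  ear e Q a1 b1 s1 -> ear e Q a2 b2 s2 ->
  (forall u v, u \in s1 -> v \in s2 -> ~~ e u v) ->
  (forall u, u \in s1 -> u \notin s2) ->
  b1 \in Q -> b2 \in Q -> index a1 Q < index b1 Q -> index a2 Q < index b2 Q ->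
  (index x Q).+1 = index y Q ->
  x \in subpath_vertices Q a1 b1 :&: subpath_vertices Q a2 b2 ->
  y \in subpath_vertices Q a1 b1 :&: subpath_vertices Q a2 b2 ->
  {subset s1 ++ s2 <= S} ->
  {subset subpath_vertices Q a1 b1 :|: subpath_vertices Q a2 b2 <= S} ->
  induced_diamond_subdivision e S.
Proof.
move=> E1 E2 NE D b1Q b2Q lt1 lt2 ixy x12 y12 Ss SQ.
wlog le_a : a1 b1 a2 b2 s1 s2 E1 E2 NE D b1Q b2Q lt1 lt2 x12 y12 Ss SQ /
    index a1 Q <= index a2 Q.
  move=> wlog_le; case: (leqP (index a1 Q) (index a2 Q)) => [|/ltnW] le_a.
    exact: (wlog_le a1 b1 a2 b2 s1 s2).
  have [esym _] := sg; apply: (wlog_le a2 b2 a1 b1 s2 s1) => //.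
  - by move=> u v u2 v1; rewrite esym NE.
  - by move=> u u2; exact: contraTN (D u) u2.
  - by rewrite setIC.
  - by rewrite setIC.
  - by move=> u; rewrite mem_cat orbC -mem_cat; exact: Ss.
  - by rewrite setUC.
have [UQ _] := ip.
have [le1 le2] := (ltnW lt1, ltnW lt2).
rewrite !in_setI !(mem_subpath_vertices _ le1) !(mem_subpath_vertices _ le2) in x12 y12.
case/and3P: x12 => /and3P[_ _ xb1] _ /andP[a2x _].
case/and3P: y12 => /and3P[_ _ yb1] _ /andP[_ yb2].
have a2b1 : index a2 Q < index b1 Q by lia.
have inS w : index a1 Q <= index w Q <= maxn (index b1 Q) (index b2 Q) -> w \in S.
  move=> /andP[a1w wM]; apply: SQ.
  rewrite in_setU (mem_subpath_vertices _ le1) (mem_subpath_vertices _ le2).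
  have wQ : w \in Q by rewrite -index_mem (leq_ltn_trans wM) // gtn_max !index_mem b1Q b2Q.
  rewrite wQ a1w /=; case: leqP => //= b1w; apply/andP; split; lia.
have layoutS (Qs : seq T) M : index M Q <= maxn (index b1 Q) (index b2 Q) ->
    {in Qs, forall w, index a1 Q <= index w Q <= index M Q} -> {subset Qs ++ s1 ++ s2 <= S}.
  move=> hM range w; rewrite mem_cat => /orP[/range /andP[a1w wM]|ws]; last exact: Ss.
  by apply: inS; rewrite a1w (leq_trans wM hM).
case: (leqP (index b2 Q) (index b1 Q)) => hb.
- have [l [A [B [C [r [EQ LA LB LC [szB range]]]]]]] := split_path4 UQ b1Q le_a lt2 hb.
  apply: (nested_ears_diamond E1 E2 NE D EQ LA LB LC szB).
  exact: layoutS _ b1 (leq_maxl _ _) range.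
- have [l [A [B [C [r [EQ LA LB LC [szB range]]]]]]] := split_path4 UQ b2Q le_a a2b1 (ltnW hb).
  apply: (crossing_ears_diamond E1 E2 NE D EQ LA LB LC szB).
  exact: layoutS _ b2 (leq_maxr _ _) range.
Qed.

End InducedPath.

Theorem mainTheorem19 (T : finType) (e : rel T) (Q : seq T)
  (K1 K2 : {set T}) (a1 b1 a2 b2 : T) :
  simple_graph e ->
  induced_path e Q ->
  component_of_complement e [set x in Q] K1 ->
  component_of_complement e [set x in Q] K2 ->
  K1 != K2 ->
  a1 != b1 -> attachments e [set x in Q] K1 = [set a1; b1] ->
  a2 != b2 -> attachments e [set x in Q] K2 = [set a2; b2] ->
  (exists x y, [/\ x \in Q, y \in Q, (index x Q).+1 = index y Q,
      x \in subpath_vertices Q a1 b1 :&: subpath_vertices Q a2 b2 &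
      y \in subpath_vertices Q a1 b1 :&: subpath_vertices Q a2 b2]) ->
  induced_diamond_subdivision e
    (bridge_vertices e [set x in Q] K1 :|: bridge_vertices e [set x in Q] K2
     :|: subpath_vertices Q a1 b1 :|: subpath_vertices Q a2 b2).
Proof.
move=> sg ip c1 c2 K12 ab1 att1 ab2 att2 [x [y [_ _ ixy x12 y12]]].
have [a1' [b1' [s1 [E1 s1K b1Q lt1 sp1]]]] := oriented_ear sg c1 ab1 att1.
have [a2' [b2' [s2 [E2 s2K b2Q lt2 sp2]]]] := oriented_ear sg c2 ab2 att2.
rewrite -sp1 -sp2 in x12 y12 *.
apply: (overlapping_ears_diamond sg ip E1 E2 _ _ b1Q b2Q lt1 lt2 ixy x12 y12).
- by move=> u v /s1K u1 /s2K v2; exact: components_no_edge c1 c2 K12 u1 v2.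
- by move=> u /s1K /(components_disjoint c1 c2 K12); apply: contra => /s2K.
- by move=> u; rewrite mem_cat /bridge_vertices !in_setU => /orP[/s1K|/s2K] ->; rewrite ?orbT.
- by move=> u; rewrite !in_setU => /orP[] ->; rewrite ?orbT.
Qed.
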